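(* Let $\{e_j\}_{j=1}^d$ be an orthonormal basis of $\mathbb C^d$. There is a map $F:\mathbb R^{3d-2}\to\mathbb C^d$ (depending on the basis) such that the following holds. Let $m>0$, let $x\in\mathbb C^d\setminus\{0\}$ and $\epsilon\in\mathbb R^{3d-2}$ satisfy $|\langle x,e_j\rangle|^2-|\epsilon_j|\ge m\|x\|_\infty^2$ for all $j\in\{1,\dots,d\}$, and let $C=\frac{(1+\sqrt2)\|\epsilon\|_\infty+\|x\|_\infty^2}{m\|x\|_\infty^2}$. Then $y=(y_1,\dots,y_d)=F(\widetilde{\mathcal A}_{\{e_j\}}(x,\epsilon))$ satisfies, for all $k\in\{1,\dots,d\}$, $$\left|y_k-\frac{\overline{x_1}}{|x_1|}x_k\right|\le\left(\frac{2+\sqrt2}{m}\,\frac{1-C^{k-1}}{1-C}+\frac{C^{k-1}}{2\sqrt m}\right)\frac{\|\epsilon\|_\infty}{\|x\|_\infty}.$$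
   Context: $\mathbb C^d$ has the standard inner product $\langle u,v\rangle=\sum u_k\overline{v_k}$. Here $x_k=\langle x,e_k\rangle$ and $\|x\|_\infty=\max_k|x_k|$ (coordinates with respect to the basis), $\|\epsilon\|_\infty=\max_j|\epsilon_j|$. Measurement vectors: $f_j=e_j$ ($1\le j\le d$), $f_j=e_{j-d}-e_{j-d+1}$ ($d+1\le j\le 2d-1$), $f_j=e_{j-(2d-1)}-ie_{j-(2d-1)+1}$ ($2d\le j\le 3d-2$); noisy measurements $\widetilde{\mathcal A}_{\{e_j\}}(x,\epsilon)=(|\langle x,f_j\rangle|^2+\epsilon_j)_{j=1}^{3d-2}$. The expression $\frac{1-C^{k-1}}{1-C}$ denotes $\sum_{i=0}^{k-2}C^i$ (which equals the quotient when $C\ne1$). *)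

From HB Require Import structures.
From mathcomp Require Import all_boot all_order all_algebra.
From mathcomp Require Import complex.
Set Implicit Arguments. Unset Strict Implicit. Unset Printing Implicit Defensive.
Import Order.TTheory GRing.Theory Num.Theory.
Local Open Scope ring_scope.

Section Defs.
Variable R : rcfType.

Definition cabs (z : R[i]) : R := Num.sqrt (complex.Re z ^+ 2 + complex.Im z ^+ 2).

Definition cinner (d : nat) (u v : 'I_d -> R[i]) : R[i] :=
  \sum_(k < d) u k * (v k)^*%C.

Definition is_orthonormal_basis (d : nat) (e : 'I_d -> 'I_d -> R[i]) : Prop :=
  forall i j : 'I_d, cinner (e i) (e j) = (i == j)%:R.

Definition bcoord (d : nat) (e : 'I_d -> 'I_d -> R[i]) (x : 'I_d -> R[i]) (k : 'I_d) : R[i] :=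
  cinner x (e k).

Definition coord_supnorm (d : nat) (e : 'I_d -> 'I_d -> R[i]) (x : 'I_d -> R[i]) : R :=
  \big[Num.max/0]_(k < d) cabs (bcoord e x k).

Definition supnorm (n : nat) (v : 'I_n -> R) : R := \big[Num.max/0]_(j < n) `|v j|.

(* basis vector with a natural-number (0-based) index; zero if out of range *)
Definition enat (d : nat) (e : 'I_d -> 'I_d -> R[i]) (k : nat) : 'I_d -> R[i] :=
  match insub k with Some i => e i | None => fun _ => 0 end.

(* measurement vectors, 0-based index j < 3d-2:
   j < d          : e_j
   d <= j < 2d-1  : e_(j-d) - e_(j-d+1)
   2d-1 <= j      : e_(j-(2d-1)) - i e_(j-(2d-1)+1)   *)
Definition fvec (d : nat) (e : 'I_d -> 'I_d -> R[i]) (j : nat) : 'I_d -> R[i] :=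
  if (j < d)%N then enat e j
  else if (j < 2 * d - 1)%N then
    (fun t => enat e (j - d)%N t - enat e (j - d)%N.+1 t)
  else
    (fun t => enat e (j - (2 * d - 1))%N t - 'i%C * enat e (j - (2 * d - 1))%N.+1 t).

Definition noisy_meas (d : nat) (e : 'I_d -> 'I_d -> R[i]) (x : 'I_d -> R[i])
  (eps : 'I_(3 * d - 2) -> R) : 'I_(3 * d - 2) -> R :=
  fun j => cabs (cinner x (fvec e j)) ^+ 2 + eps j.

(* entry of a real vector by a natural-number index; zero if out of range *)
Definition vnat (n : nat) (v : 'I_n -> R) (k : nat) : R :=
  match insub k with Some i => v i | None => 0 end.

End Defs.

(* Write x_k for the coordinates of x and b for the noisy measurements.  The
   measurements at e_k, e_k - e_(k+1) and e_k - i e_(k+1) determine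
   x_k conj(x_(k+1)) by polarization up to an error (1 + sqrt 2) ||eps||, and
   b_k = |x_k|^2 + eps_k.  Reconstruct y_1 = sqrt b_1 and
   y_(k+1) = conj(W_k) y_k / b_k, W_k the polarization estimate: without noise
   this gives y_k = u x_k with u = conj(x_1) / |x_1| unimodular.  One step
   multiplies the error |y_k - u x_k| by at most C and adds
   (2 + sqrt 2) ||eps|| / (m ||x||), and the first error is at most
   ||eps|| / (2 sqrt m ||x||); summing the geometric recursion gives the bound. *)

From HB Require Import structures.
From mathcomp Require Import all_boot all_order all_algebra.
From mathcomp Require Import complex.
From mathcomp Require Import ring lra zify.
Import Order.TTheory GRing.Theory Num.Theory.
Set Implicit Arguments. Unset Strict Implicit.
Local Open Scope ring_scope.

Section Modulus.
Variable R : rcfType.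
Implicit Types (z w : R[i]) (c : R).

Lemma cabs_normc z : cabs z = Normc.normc z.
Proof. by case: z. Qed.

Lemma cabs_ge0 z : 0 <= cabs z.
Proof. exact: sqrtr_ge0. Qed.

Lemma cabs0 : cabs (0 : R[i]) = 0.
Proof. by rewrite cabs_normc Normc.normc0. Qed.

Lemma cabs_eq0 z : cabs z = 0 -> z = 0.
Proof. by rewrite cabs_normc => /Normc.eq0_normc. Qed.

Lemma cabsM z w : cabs (z * w) = cabs z * cabs w.
Proof. by rewrite !cabs_normc Normc.normcM. Qed.

Lemma cabsV z : cabs z^-1 = (cabs z)^-1.
Proof. by rewrite !cabs_normc Normc.normcV. Qed.

Lemma cabsN z : cabs (- z) = cabs z.
Proof. by rewrite !cabs_normc (normcN z). Qed.

Lemma cabsD z w : cabs (z + w) <= cabs z + cabs w.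
Proof. by rewrite !cabs_normc (le_normcD z w). Qed.

Lemma cabsJ z : cabs z^*%C = cabs z.
Proof. by case: z => a b; rewrite /cabs /= sqrrN. Qed.

Lemma cabs_real c : cabs c%:C%C = `|c|.
Proof. by rewrite /cabs /= expr0n addr0 sqrtr_sqr. Qed.

Lemma sqr_cabs z : cabs z ^+ 2 = complex.Re z ^+ 2 + complex.Im z ^+ 2.
Proof. by rewrite sqr_sqrtr // addr_ge0 // sqr_ge0. Qed.

Lemma mulcJ z : z * z^*%C = (cabs z ^+ 2)%:C%C.
Proof.
case: z => a b; apply/eqP; rewrite eq_complex sqr_cabs /=.
by apply/andP; split; apply/eqP; ring.
Qed.

Lemma cabs_le_parts z (r : R) : `|complex.Re z| <= r -> `|complex.Im z| <= r ->
  cabs z <= Num.sqrt 2 * r.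
Proof.
move=> hre him; have r0 : 0 <= r by apply: le_trans hre.
rewrite -(ger0_norm r0) -sqrtr_sqr -sqrtrM ?ler0n // ler_sqrt ?mulr_ge0 ?sqr_ge0 //.
by move: hre him; rewrite !ler_norml => /andP[? ?] /andP[? ?]; nra.
Qed.

End Modulus.

Section Polarization.
Variable R : rcfType.

(* Estimate of p * q^* from the measurements b0, b1, bm, bi of |p|^2, |q|^2,
   |p - q|^2 and |p + 'i q|^2. *)
Definition polar_estimate (b0 b1 bm bi : R) : R[i] :=
  Complex ((b0 + b1 - bm) / 2) ((bi - b0 - b1) / 2).

Lemma polar_estimateD b0 b1 bm bi e0 e1 em ei :
  polar_estimate (b0 + e0) (b1 + e1) (bm + em) (bi + ei) =
  polar_estimate b0 b1 bm bi + polar_estimate e0 e1 em ei.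
Proof. by apply/eqP; rewrite eq_complex /=; apply/andP; split; apply/eqP; ring. Qed.

Lemma polarization (p q : R[i]) :
  polar_estimate (cabs p ^+ 2) (cabs q ^+ 2) (cabs (p - q) ^+ 2)
    (cabs (p + 'i%C * q) ^+ 2) = p * q^*%C.
Proof.
case: p q => a b [c d]; apply/eqP; rewrite eq_complex !sqr_cabs /=.
by apply/andP; split; apply/eqP; field.
Qed.

Lemma polar_estimate_noise (e0 e1 em ei ne : R) :
  `|e0| <= ne -> `|e1| <= ne -> `|em| <= ne -> `|ei| <= ne ->
  cabs (polar_estimate e0 e1 em ei) <= (1 + Num.sqrt 2) * ne.
Proof.
move=> /[!ler_norml] /andP[h0 h0'] /andP[h1 h1'] /andP[hm hm'] /andP[hi hi'].
have s2 : Num.sqrt 2 ^+ 2 = 2 :> R by rewrite sqr_sqrtr.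
have s0 : 0 <= Num.sqrt 2 :> R := sqrtr_ge0 _.
apply: le_trans (cabs_le_parts (r := 3 / 2 * ne) _ _) _; rewrite /= ?ler_norml.
- by apply/andP; split; lra.
- by apply/andP; split; lra.
- nra.
Qed.

End Polarization.

Section PhaseRecovery.
Variable R : rcfType.
Implicit Types (W y u z : R[i]).

Lemma cabs_divr z (b : R) : 0 < b -> cabs (z / b%:C%C) = cabs z / b.
Proof. by move=> b0; rewrite cabsM cabsV cabs_real gtr0_norm. Qed.

Lemma sqrt_sub_le (a b beta eta : R) : 0 < beta -> 0 <= a -> beta <= a ^+ 2 ->
  beta <= b -> `|b - a ^+ 2| <= eta ->
  `|Num.sqrt b - a| <= eta / (2 * Num.sqrt beta).
Proof.
move=> beta0 a0 hbeta_a hbeta_b heta.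
have sb0 : 0 < Num.sqrt beta by rewrite sqrtr_gt0.
have hsa : Num.sqrt beta <= a by rewrite -(ger0_norm a0) -sqrtr_sqr ler_sqrt ?sqr_ge0.
have hsb : Num.sqrt beta <= Num.sqrt b by rewrite ler_sqrt // (le_trans (ltW beta0)).
have hprod : `|Num.sqrt b - a| * (Num.sqrt b + a) = `|b - a ^+ 2|.
  rewrite -[Num.sqrt b + a in LHS]ger0_norm ?addr_ge0 ?sqrtr_ge0 // -normrM.
  by rewrite -subr_sqr sqr_sqrtr // (le_trans (ltW beta0)).
rewrite ler_pdivlMr ?mulr_gt0 //.
apply: le_trans heta; rewrite -hprod; apply: ler_wpM2l => //; lra.
Qed.

Lemma phase_base_error (X0 : R[i]) (b beta eta : R) :
  0 < beta -> beta <= cabs X0 ^+ 2 -> beta <= b -> `|b - cabs X0 ^+ 2| <= eta ->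
  cabs ((Num.sqrt b)%:C%C - X0^*%C / (cabs X0)%:C%C * X0)
    <= eta / (2 * Num.sqrt beta).
Proof.
move=> beta0 hX0 hb heta.
have a0 : 0 < cabs X0.
  by rewrite lt0r cabs_ge0 andbT; apply: contraTneq hX0 => ->; rewrite expr0n /= -ltNge.
have -> : X0^*%C / (cabs X0)%:C%C * X0 = (cabs X0)%:C%C.
  rewrite mulrAC (mulrC X0^*%C) mulcJ expr2 rmorphM /= mulfK //.
  by rewrite eq_complex /= eqxx andbT gt_eqF.
by rewrite -rmorphB cabs_real sqrt_sub_le ?cabs_ge0.
Qed.

Lemma phase_step_identity (X0 X1 : R[i]) W y u (b : R) : b != 0 ->
  W^*%C * y / b%:C%C - u * X1 =
  W^*%C * (y - u * X0) / b%:C%C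
  + u * ((W - X0 * X1^*%C)^*%C * X0 - (b - cabs X0 ^+ 2)%:C%C * X1) / b%:C%C.
Proof.
move=> b0; have bC : b%:C%C != 0 :> R[i] by rewrite eq_complex /= eqxx andbT.
rewrite rmorphB rmorphM /= conjcK rmorphB /= -mulcJ.
by field.
Qed.

Lemma phase_step_error (X0 X1 : R[i]) W y u (b beta delta eta nx : R) :
  0 < beta -> beta <= b -> cabs u = 1 -> cabs X0 <= nx -> cabs X1 <= nx ->
  `|b - cabs X0 ^+ 2| <= eta -> cabs (W - X0 * X1^*%C) <= delta ->
  cabs (W^*%C * y / b%:C%C - u * X1)
    <= (delta + nx ^+ 2) / beta * cabs (y - u * X0) + (delta + eta) * nx / beta.
Proof.
move=> beta0 hb u1 hX0 hX1 heta hW.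
have b0 : 0 < b := lt_le_trans beta0 hb.
have hbinv : b^-1 <= beta^-1 by rewrite lef_pV2 ?posrE.
have hW' : cabs W <= delta + nx ^+ 2.
  rewrite -[W](subrK (X0 * X1^*%C)); apply: le_trans (cabsD _ _) _.
  by rewrite lerD // cabsM cabsJ expr2 ler_pM ?cabs_ge0.
have hnoise : cabs ((W - X0 * X1^*%C)^*%C * X0 - (b - cabs X0 ^+ 2)%:C%C * X1)
    <= (delta + eta) * nx.
  apply: le_trans (cabsD _ _) _; rewrite cabsN !cabsM cabsJ cabs_real mulrDl.
  by rewrite lerD // ler_pM ?cabs_ge0 ?normr_ge0.
rewrite (@phase_step_identity X0 X1 W y u b (lt0r_neq0 b0)).
apply: le_trans (cabsD _ _) _; rewrite !cabs_divr // cabsM cabsJ cabsM u1 mul1r.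
have binv0 : 0 <= b^-1 by rewrite invr_ge0 ltW.
apply: lerD; last by apply: ler_pM; rewrite ?cabs_ge0.
by rewrite mulrAC; apply: ler_wpM2r; rewrite ?cabs_ge0 //; apply: ler_pM; rewrite ?cabs_ge0.
Qed.

Lemma affine_recurrence_bound (E : nat -> R) (N : nat) (C K E0 : R) :
  0 <= C -> E 0%N <= E0 -> (forall n, (n.+1 < N)%N -> E n.+1 <= C * E n + K) ->
  forall n, (n < N)%N -> E n <= K * \sum_(i < n) C ^+ i + C ^+ n * E0.
Proof.
move=> C0 hE0 hstep; elim=> [|n IH] hn; first by rewrite big_ord0 mulr0 add0r mul1r.
have geomS : \sum_(i < n.+1) C ^+ i = 1 + C * \sum_(i < n) C ^+ i.
  rewrite big_ord_recl expr0 mulr_sumr; congr (_ + _).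
  by apply: eq_bigr => i _; rewrite exprS.
apply: le_trans (hstep n hn) _; apply: le_trans (lerD (ler_wpM2l C0 (IH (ltnW hn))) (lexx K)) _.
by rewrite geomS exprS le_eqVlt; apply/orP; left; apply/eqP; ring.
Qed.

End PhaseRecovery.

Section Vectors.
Variables (R : rcfType) (n : nat) (v : 'I_n -> R).

Lemma vnat_ord (j : 'I_n) : vnat v j = v j.
Proof. by rewrite /vnat valK. Qed.

Lemma supnorm_ge0 : 0 <= supnorm v.
Proof. exact: bigmax_ge_id. Qed.

Lemma normr_vnat_le j : `|vnat v j| <= supnorm v.
Proof.
rewrite /vnat; case: insubP => [i _ _ | _]; last by rewrite normr0 supnorm_ge0.
exact: (le_bigmax _ (fun j => `|v j|)).
Qed.

End Vectors.

Section Measurements.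
Variables (R : rcfType) (d : nat) (e : 'I_d -> 'I_d -> R[i]) (x : 'I_d -> R[i]).

Definition coordn (k : nat) : R[i] := cinner x (enat e k).

Lemma coordn_ord (k : 'I_d) : coordn k = bcoord e x k.
Proof. by rewrite /coordn /enat valK. Qed.

Lemma coord_supnorm_ge0 : 0 <= coord_supnorm e x.
Proof. exact: bigmax_ge_id. Qed.

Lemma cabs_coordn_le k : cabs (coordn k) <= coord_supnorm e x.
Proof.
rewrite /coordn /enat; case: insubP => [i _ _ | _].
  exact: (le_bigmax _ (fun j => cabs (bcoord e x j))).
rewrite /cinner big1 ?cabs0 ?coord_supnorm_ge0 // => t _.
by rewrite conjc0 mulr0.
Qed.

Lemma cinnerB (f g : 'I_d -> R[i]) :
  cinner x (fun t => f t - g t) = cinner x f - cinner x g.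
Proof. by rewrite /cinner -sumrB; apply: eq_bigr => t _; rewrite rmorphB mulrBr. Qed.

Lemma cinnerBi (f g : 'I_d -> R[i]) :
  cinner x (fun t => f t - 'i%C * g t) = cinner x f + 'i%C * cinner x g.
Proof.
have conj_i : Complex 0 (-1) = - 'i%C :> R[i] by apply/eqP; rewrite eq_complex /= oppr0 !eqxx.
rewrite /cinner mulr_sumr -big_split; apply: eq_bigr => t _.
by rewrite rmorphB rmorphM /= conj_i; ring.
Qed.

Variable eps : 'I_(3 * d - 2) -> R.
Let b := noisy_meas e x eps.

Lemma vnat_noisy_meas j : (j < 3 * d - 2)%N ->
  vnat b j = cabs (cinner x (fvec e j)) ^+ 2 + vnat eps j.
Proof. by move=> hj; rewrite -[j]/(val (Ordinal hj)) !vnat_ord. Qed.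

Lemma noisy_meas_coord k : (k < d)%N -> vnat b k = cabs (coordn k) ^+ 2 + vnat eps k.
Proof. by move=> hk; rewrite vnat_noisy_meas /fvec ?hk //; lia. Qed.

Lemma noisy_meas_diff k : (k.+1 < d)%N ->
  vnat b (d + k) = cabs (coordn k - coordn k.+1) ^+ 2 + vnat eps (d + k).
Proof.
move=> hk; rewrite vnat_noisy_meas; last by lia.
have [h1 h2] : (d + k < d)%N = false /\ (d + k < 2 * d - 1)%N by split; lia.
by rewrite /fvec h1 h2 addKn cinnerB.
Qed.

Lemma noisy_meas_idiff k : (k.+1 < d)%N ->
  vnat b (2 * d - 1 + k) =
    cabs (coordn k + 'i%C * coordn k.+1) ^+ 2 + vnat eps (2 * d - 1 + k).
Proof.
move=> hk; rewrite vnat_noisy_meas; last by lia.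
have [h1 h2] : (2 * d - 1 + k < d)%N = false /\ (2 * d - 1 + k < 2 * d - 1)%N = false
  by split; lia.
by rewrite /fvec h1 h2 addKn cinnerBi.
Qed.

End Measurements.

Definition overlap_estimate (R : rcfType) (d : nat) (b : 'I_(3 * d - 2) -> R) (k : nat) :=
  polar_estimate (vnat b k) (vnat b k.+1) (vnat b (d + k)) (vnat b (2 * d - 1 + k)).

Fixpoint recon (R : rcfType) (d : nat) (b : 'I_(3 * d - 2) -> R) (k : nat) : R[i] :=
  if k is k'.+1 then (overlap_estimate b k')^*%C * recon b k' / (vnat b k')%:C%C
  else (Num.sqrt (vnat b 0))%:C%C.

Lemma cabs_phase (R : rcfType) (z : R[i]) :
  z != 0 -> cabs (z^*%C / (cabs z)%:C%C) = 1.
Proof.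
move=> z0; have cz0 : 0 < cabs z.
  by rewrite lt_def cabs_ge0 andbT; apply: contra_neq z0 => /cabs_eq0.
by rewrite cabs_divr // cabsJ divff // gt_eqF.
Qed.

Section ReconstructionError.
Variables (R : rcfType) (d : nat) (e : 'I_d -> 'I_d -> R[i]) (x : 'I_d -> R[i]).
Variables (eps : 'I_(3 * d - 2) -> R) (m : R).
Hypothesis m_gt0 : 0 < m.
Let nx := coord_supnorm e x.
Let ne := supnorm eps.
Let b := noisy_meas e x eps.
Hypothesis coord_large :
  forall j, (j < d)%N -> m * nx ^+ 2 <= cabs (coordn e x j) ^+ 2 - `|vnat eps j|.

Lemma overlap_estimate_error k : (k.+1 < d)%N ->
  cabs (overlap_estimate b k - coordn e x k * (coordn e x k.+1)^*%C)
    <= (1 + Num.sqrt 2) * ne.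
Proof.
move=> hk; rewrite /overlap_estimate noisy_meas_coord 1?noisy_meas_coord //; last by lia.
rewrite noisy_meas_diff // noisy_meas_idiff // polar_estimateD polarization addrC addKr.
by apply: polar_estimate_noise; apply: normr_vnat_le.
Qed.

Lemma noisy_meas_close j : (j < d)%N -> `|vnat b j - cabs (coordn e x j) ^+ 2| <= ne.
Proof. by move=> hj; rewrite noisy_meas_coord // addrC addKr normr_vnat_le. Qed.

Lemma noisy_meas_large j : (j < d)%N -> m * nx ^+ 2 <= vnat b j.
Proof.
move=> hj; rewrite noisy_meas_coord //; apply: le_trans (coord_large hj) _.
by rewrite lerD2l lerNl -normrN ler_norm.
Qed.

Lemma coord_sqr_large j : (j < d)%N -> m * nx ^+ 2 <= cabs (coordn e x j) ^+ 2.
Proof. by move=> hj; apply: le_trans (coord_large hj) _; rewrite lerBlDr lerDl. Qed.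

Lemma recon_eq0 k : nx = 0 -> (k < d)%N -> recon b k = 0.
Proof.
move=> nx0 hk; have b0 j : (j < d)%N -> vnat b j = 0.
  move=> hj; have cx0 : coordn e x j = 0.
    by apply: cabs_eq0; apply: le_anti; rewrite cabs_ge0 -nx0 cabs_coordn_le.
  have := coord_large hj; rewrite cx0 cabs0 nx0 !expr0n /= mulr0 sub0r oppr_ge0 normr_le0.
  by move=> /eqP eps0; rewrite noisy_meas_coord // cx0 cabs0 eps0 expr0n add0r.
case: k hk => [|k] hk /=; first by rewrite b0 // sqrtr0.
by rewrite b0 1?ltnW // invr0 mulr0.
Qed.

Hypotheses (d_gt0 : (0 < d)%N) (nx_gt0 : 0 < nx).
Let u := (coordn e x 0)^*%C / (cabs (coordn e x 0))%:C%C.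

Lemma cabs_u : cabs u = 1.
Proof.
apply: cabs_phase; apply: contraTneq (coord_sqr_large d_gt0) => ->.
by rewrite cabs0 expr0n -ltNge mulr_gt0 ?exprn_gt0.
Qed.

Lemma recon_base_error :
  cabs (recon b 0 - u * coordn e x 0) <= 1 / (2 * Num.sqrt m) * (ne / nx).
Proof.
have beta_gt0 : 0 < m * nx ^+ 2 by rewrite mulr_gt0 ?exprn_gt0.
have sm_gt0 : 0 < Num.sqrt m by rewrite sqrtr_gt0.
have -> : 1 / (2 * Num.sqrt m) * (ne / nx) = ne / (2 * Num.sqrt (m * nx ^+ 2)).
  by rewrite (sqrtrM _ (ltW m_gt0)) sqrtr_sqr gtr0_norm //; field; rewrite !gt_eqF.
exact: phase_base_error beta_gt0 (coord_sqr_large d_gt0) (noisy_meas_large d_gt0)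
  (noisy_meas_close d_gt0).
Qed.

Lemma recon_step_error n : (n.+1 < d)%N ->
  cabs (recon b n.+1 - u * coordn e x n.+1)
    <= ((1 + Num.sqrt 2) * ne + nx ^+ 2) / (m * nx ^+ 2)
         * cabs (recon b n - u * coordn e x n)
       + (2 + Num.sqrt 2) / m * (ne / nx).
Proof.
move=> hn; have beta_gt0 : 0 < m * nx ^+ 2 by rewrite mulr_gt0 ?exprn_gt0.
have -> : (2 + Num.sqrt 2) / m * (ne / nx) = ((1 + Num.sqrt 2) * ne + ne) * nx / (m * nx ^+ 2).
  by field; rewrite !gt_eqF.
exact: phase_step_error beta_gt0 (noisy_meas_large (ltnW hn)) cabs_u
  (cabs_coordn_le e x n) (cabs_coordn_le e x n.+1) (noisy_meas_close (ltnW hn))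
  (overlap_estimate_error hn).
Qed.

End ReconstructionError.

Theorem mainTheorem9 (R : rcfType) (d : nat) (hd : (0 < d)%N)
    (e : 'I_d -> 'I_d -> R[i]) :
  is_orthonormal_basis e ->
  exists F : ('I_(3 * d - 2) -> R) -> ('I_d -> R[i]),
    forall (m : R) (x : 'I_d -> R[i]) (eps : 'I_(3 * d - 2) -> R),
      0 < m ->
      x <> (fun _ => 0) ->
      (forall j : 'I_d,
          cabs (bcoord e x j) ^+ 2 - `|vnat eps j| >= m * coord_supnorm e x ^+ 2) ->
      let nx := coord_supnorm e x in
      let ne := supnorm eps in
      let C := ((1 + Num.sqrt 2) * ne + nx ^+ 2) / (m * nx ^+ 2) in
      let y := F (noisy_meas e x eps) in
      let x1 := bcoord e x (Ordinal hd) in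
      forall k : 'I_d,
        cabs (y k - ((x1^*)%C / ((cabs x1)%:C)%C) * bcoord e x k)
        <= ((2 + Num.sqrt 2) / m * (\sum_(i < k) C ^+ i)
            + C ^+ k / (2 * Num.sqrt m)) * (ne / nx).
Proof.
(* Orthonormality and x <> 0 are not needed: the reconstruction only uses the
   coordinates of x, and when they all vanish so does y, while the bound is 0
   through the junk value ne / 0 = 0. *)
move=> _; exists (fun b (k : 'I_d) => recon b k) => m x eps m_gt0 _ hx nx ne C y x1 k.
have coord_large j : (j < d)%N -> m * nx ^+ 2 <= cabs (coordn e x j) ^+ 2 - `|vnat eps j|.
  by move=> hj; have := hx (Ordinal hj); rewrite -coordn_ord.
rewrite /y /x1 -!coordn_ord.
have [nx0 | nx_gt0] := eqVneq nx 0.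
  have xk0 : coordn e x k = 0.
    by apply: cabs_eq0; apply: le_anti; rewrite cabs_ge0 -nx0 cabs_coordn_le.
  by rewrite (recon_eq0 coord_large) // xk0 mulr0 subr0 cabs0 nx0 invr0 !mulr0.
have {}nx_gt0 : 0 < nx by rewrite lt_def nx_gt0 coord_supnorm_ge0.
have C_ge0 : 0 <= C.
  apply: divr_ge0; last by rewrite mulr_ge0 ?sqr_ge0 ?(ltW m_gt0).
  by rewrite addr_ge0 ?sqr_ge0 // mulr_ge0 ?addr_ge0 ?sqrtr_ge0 ?supnorm_ge0.
have := affine_recurrence_bound
  (E := fun n => cabs (recon (noisy_meas e x eps) n
                        - (coordn e x 0)^*%C / (cabs (coordn e x 0))%:C%C * coordn e x n))
  C_ge0 (recon_base_error m_gt0 coord_large hd nx_gt0)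
  (recon_step_error m_gt0 coord_large hd nx_gt0) (ltn_ord k).
move/le_trans; apply; rewrite le_eqVlt; apply/orP; left; apply/eqP.
rewrite /ne /nx; ring.
Qed.
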